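(* For every positive integer $n$ and every $t\in\{1,2,3\}$, $$M(n,t)\le \sum_{\mathbf{x}\in\{0,1\}^n}\frac{1}{|\Phi_t(\mathbf{x})|}.$$
   Context: A grain pattern of length $n$ is a subset $E\subseteq\{2,\dots,n\}$ containing no two consecutive integers. For such $E$, the map $\phi_E:\{0,1\}^n\to\{0,1\}^n$ sends $\mathbf{x}=(x_1,\dots,x_n)$ to $\mathbf{y}$ with $y_j=x_{j-1}$ if $j\in E$ and $y_j=x_j$ otherwise. For $t\ge0$, $\mathcal{E}_{n,t}$ is the set of grain patterns of length $n$ with $|E|\le t$, and $\Phi_t(\mathbf{x})=\{\phi_E(\mathbf{x}):E\in\mathcal{E}_{n,t}\}$. Two words $\mathbf{x}_1,\mathbf{x}_2$ are $t$-confusable if $\Phi_t(\mathbf{x}_1)\cap\Phi_t(\mathbf{x}_2)\ne\emptyset$. A code $\mathcal{C}\subseteq\{0,1\}^n$ is $t$-grain-correcting if no two distinct codewords are $t$-confusable. $M(n,t)$ is the maximum cardinality of a $t$-grain-correcting code of length $n$. *)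

From mathcomp Require Import all_boot all_order all_algebra.
Set Implicit Arguments. Unset Strict Implicit. Unset Printing Implicit Defensive.

(* Words of length n: x = (x_1,...,x_n) is represented by x : {ffun 'I_n -> bool},
   with position j (1-indexed) stored at index j-1 (0-indexed). *)
Definition word (n : nat) := {ffun 'I_n -> bool}.

(* A grain pattern E ⊆ {2,...,n} with no two consecutive integers.
   In 0-indexed form: E : {set 'I_n}, index 0 (position 1) not in E,
   and no two elements i, j of E with j = i + 1. *)
Definition grain_pattern (n : nat) (E : {set 'I_n}) : bool :=
  [forall i : 'I_n, (i \in E) ==> (0 < (i : nat))%N] &&
  [forall i : 'I_n, forall j : 'I_n,
      ((i \in E) && (j \in E)) ==> ((j : nat) != (i : nat).+1)].

(* phi_E(x)_j = x_{j-1} if j ∈ E, and x_j otherwise.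
   insubd j (j-1) is the index j-1 (always < n); for j ∈ E we have j > 0. *)
Definition phi (n : nat) (E : {set 'I_n}) (x : word n) : word n :=
  [ffun j : 'I_n => if j \in E then x (insubd j (j : nat).-1) else x j].

Definition grain_patterns (n t : nat) : {set {set 'I_n}} :=
  [set E : {set 'I_n} | grain_pattern E && (#|E| <= t)%N].

Definition Phi (n t : nat) (x : word n) : {set word n} :=
  [set phi E x | E in grain_patterns n t].

Definition confusable (n t : nat) (x1 x2 : word n) : bool :=
  [exists y, (y \in Phi t x1) && (y \in Phi t x2)].

Definition grain_correcting (n t : nat) (C : {set word n}) : bool :=
  [forall x1 in C, forall x2 in C, (x1 != x2) ==> ~~ confusable t x1 x2].

Definition M (n t : nat) : nat :=
  \max_(C : {set word n} | grain_correcting t C) #|C|.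

From mathcomp Require Import all_boot all_order all_algebra ring.
Set Implicit Arguments. Unset Strict Implicit. Unset Printing Implicit Defensive.
Import Order.TTheory GRing.Theory Num.Theory.

(* Let B(x) ([switches x]) be the set of positions k > 0 with x_k <> x_(k-1).  A grain
   pattern E only acts on x through E ∩ B(x), on which phi_E flips the bits;
   hence |Phi_t(x)| is the number of grain patterns of size <= t inside B(x),
   and B(phi_E x) = B(x) Δ E Δ (E + 1).  An explicit injection
   (E, F) |-> (E', F') from the pairs with F inside B(phi_E x) into pairs of
   patterns inside B(x) gives  sum_(y in Phi x) |Phi y| <= |Phi x|^2.
   By convexity of a |-> 1/a this yields  sum_(y in Phi x) 1/|Phi y| >= 1,
   and as the sets Phi c of the codewords c of a grain-correcting code are
   disjoint, summing over the code gives the bound. *)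

Section BallPacking.
Local Open Scope ring_scope.
Variables (R : realFieldType) (T : finType) (ball : T -> {set T}).
Hypothesis mem_ball : forall x, x \in ball x.
Hypothesis sum_card_ball_le : forall x, (\sum_(y in ball x) #|ball y| <= #|ball x| ^ 2)%N.

(* Tangent line of the convex function a |-> 1/a at a = k. *)
Lemma tangent_le_inv (a k : R) : 0 < a -> 0 < k -> 2 / k - a / k ^+ 2 <= a^-1.
Proof.
move=> a_gt0 k_gt0; rewrite -subr_ge0.
have -> : a^-1 - (2 / k - a / k ^+ 2) = (a - k) ^+ 2 / (a * k ^+ 2).
  by field; rewrite ?mulf_neq0 ?expf_neq0 ?lt0r_neq0.
by rewrite divr_ge0 ?sqr_ge0 // mulr_ge0 ?sqr_ge0 // ltW.
Qed.

Lemma card_ball_gt0 x : (0 < #|ball x|)%N.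
Proof. by apply/card_gt0P; exists x. Qed.

Lemma sum_inv_card_ball_ge1 x : 1 <= \sum_(y in ball x) (#|ball y|%:R)^-1 :> R.
Proof.
set k := #|ball x|; have k_gt0 : 0 < k%:R :> R by rewrite ltr0n card_ball_gt0.
have tangent y : 2 / k%:R - #|ball y|%:R / k%:R ^+ 2 <= (#|ball y|%:R)^-1 :> R.
  by rewrite tangent_le_inv // ltr0n card_ball_gt0.
apply: le_trans (ler_sum _ (fun y _ => tangent y)).
rewrite sumrB sumr_const -mulr_suml -natr_sum -/k.
have -> : (2 / k%:R) *+ k = 2 :> R by rewrite -mulr_natr divfK // lt0r_neq0.
rewrite lerBrDr -lerBrDl (_ : 2 - 1 = 1); last by ring.
by rewrite ler_pdivrMr ?exprn_gt0 // mul1r -natrX ler_nat.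
Qed.

Lemma card_le_sum_inv_card_ball (C : {set T}) :
    {in C &, forall c1 c2, c1 != c2 -> [disjoint ball c1 & ball c2]} ->
  #|C|%:R <= \sum_x (#|ball x|%:R)^-1 :> R.
Proof.
move=> disj; rewrite -sum1_card natr_sum.
apply: le_trans (ler_sum _ (fun c _ => sum_inv_card_ball_ge1 c)) _.
under eq_bigr do rewrite big_mkcond.
rewrite exchange_big /=; apply: ler_sum => y _; rewrite -big_mkcondr /=.
rewrite sumr_const.
have : (#|[pred c | (c \in C) && (y \in ball c)]| <= 1)%N.
  apply/card_le1_eqP => c1 c2; rewrite !inE => /andP[c1C y1] /andP[c2C y2].
  apply/eqP; apply: contraT => c12.
  by rewrite (disjointFr (disj _ _ c2C c1C c12) y2) in y1.
by case: #|[pred c | _ & _]| => [|[|//]] _; rewrite ?mulr0n ?mulr1n ?invr_ge0.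
Qed.

End BallPacking.

(* e and f are the indicators of grain patterns E and F with F inside
   b Δ E Δ (E + 1) for some b containing E; (fold1, fold2) is the injection
   of the header.  An E-position k flanked by F-positions k - 1 and k + 1 is
   [moved] to k - 1; fold2 keeps the F-positions not preceded by an
   E-position, adds k for each F-position k + 1 preceded by an E-position k,
   and drops the F-position k - 1 of a moved k, which fold1 now occupies. *)
Section Fold.
Variables e f : nat -> bool.
Hypothesis e0 : e 0 = false.
Hypothesis e_sparse : forall k, ~~ (e k && e k.+1).
Hypothesis f0 : f 0 = false.
Hypothesis f_sparse : forall k, ~~ (f k && f k.+1).
Hypothesis e_before_fe : forall k, (f k.+1 && e k.+1) ==> e k.

Definition moved k := [&& e k, f k.-1, f k.+1 & ~~ e k.-2].
Definition fold1 k := (e k && ~~ moved k) || moved k.+1.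
Definition fold2 k := [&& f k, ~~ e k.-1 & ~~ moved k.+1] || (e k && f k.+1).

Local Ltac bool_cases := rewrite /=; try solve [simpl; intros; done];
  match goal with |- context [?g ?p] => is_var g;
    lazymatch type of g with nat -> bool => case: (g p); bool_cases end end.
Local Ltac facts_at k := move: (e_sparse k) (f_sparse k) (e_before_fe k).
Local Ltac fold_cases k := rewrite /fold1 /fold2 /moved;
  case: k => [|[|[|k]]] /=;
  [ facts_at 0; facts_at 1; facts_at 2; facts_at 3
  | facts_at 0; facts_at 1; facts_at 2; facts_at 3; facts_at 4
  | facts_at 0; facts_at 1; facts_at 2; facts_at 3; facts_at 4; facts_at 4.+1
  | facts_at k.+1; facts_at k.+2; facts_at k.+3; facts_at k.+4;
    facts_at k.+4.+1; facts_at k.+4.+2 ];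
  rewrite ?e0 ?f0 /=; bool_cases.

Lemma fold1_0 : fold1 0 = false.
Proof. by rewrite /fold1 /moved /= e0 f0 /= andbF. Qed.

Lemma fold2_0 : fold2 0 = false.
Proof. by rewrite /fold2 /moved /= e0 f0. Qed.

Lemma fold1_sparse k : ~~ (fold1 k && fold1 k.+1).
Proof. fold_cases k. Qed.

Lemma fold2_sparse k : ~~ (fold2 k && fold2 k.+1).
Proof. fold_cases k. Qed.

Lemma fold1_support k : fold1 k ==> e k || e k.+1.
Proof. rewrite /fold1 /moved; bool_cases. Qed.

Lemma fold2_support k : fold2 k ==> f k || e k.
Proof. rewrite /fold2 /moved; bool_cases. Qed.

Lemma moved_fold k : [&& 0 < k, fold1 k.-1 & fold2 k] = moved k.
Proof. fold_cases k. Qed.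

Lemma fold1_unmove k : (fold1 k && ~~ moved k.+1) || moved k = e k.
Proof. fold_cases k. Qed.

Lemma fold2_unmove k : fold2 k || moved k.+1 = (f k && ~~ e k.-1) || (e k && f k.+1).
Proof. fold_cases k. Qed.

Lemma fold2_unshift k :
  (((f k && ~~ e k.-1) || (e k && f k.+1)) && ~~ e k) ||
  [&& 0 < k, (f k.-1 && ~~ e k.-2) || (e k.-1 && f k) & e k.-1] = f k.
Proof. fold_cases k. Qed.

Section Inside.
Variable b : nat -> bool.
Hypothesis e_sub : forall k, e k ==> b k.
Hypothesis f_sub : forall k, f k.+1 ==> b k.+1 (+) e k.+1 (+) e k.

Local Ltac sub_facts_at k := move: (e_sparse k) (f_sparse k) (e_sub k) (f_sub k).
Local Ltac sub_cases k := case: k => [|[|k]] /=;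
  [ sub_facts_at 0; sub_facts_at 1
  | sub_facts_at 0; sub_facts_at 1; sub_facts_at 2
  | sub_facts_at k; sub_facts_at k.+1; sub_facts_at k.+2; sub_facts_at k.+3 ];
  rewrite ?e0 ?f0 /=; bool_cases.

Lemma fold1_sub k : fold1 k ==> b k.
Proof. rewrite /fold1 /moved; sub_cases k. Qed.

Lemma fold2_sub k : fold2 k ==> b k.
Proof. rewrite /fold2 /moved; sub_cases k. Qed.

End Inside.
End Fold.

Section Words.
Variable n : nat.
Implicit Types (A E F : {set 'I_n}) (x : word n) (k t : nat).

Definition nat_in A k := [exists i in A, val i == k].

Lemma nat_in_ord A (i : 'I_n) : nat_in A i = (i \in A).
Proof.
apply/existsP/idP => [[j /andP[jA /eqP/val_inj <-]] //|iA].
by exists i; rewrite iA eqxx.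
Qed.

Lemma nat_inP A k : reflect (exists2 i : 'I_n, i \in A & val i = k) (nat_in A k).
Proof.
apply: (iffP existsP) => [[i /andP[iA /eqP <-]]|[i iA <-]]; first by exists i.
by exists i; rewrite iA eqxx.
Qed.

Lemma nat_in_lt A k : nat_in A k -> k < n.
Proof. by case/nat_inP=> i _ <-; apply: ltn_ord. Qed.

Lemma nat_in_ge A k : n <= k -> nat_in A k = false.
Proof. by move=> le_nk; apply/negbTE/negP=> /nat_in_lt; rewrite ltnNge le_nk. Qed.

Lemma eq_set_nat A1 A2 : (forall k, nat_in A1 k = nat_in A2 k) -> A1 = A2.
Proof. by move=> eqA; apply/setP=> i; rewrite -!nat_in_ord eqA. Qed.

Lemma subset_nat A1 A2 : (forall k, nat_in A1 k -> nat_in A2 k) -> A1 \subset A2.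
Proof. by move=> subA; apply/subsetP=> i; rewrite -!nat_in_ord; apply: subA. Qed.

Lemma nat_in_sub A1 A2 k : A1 \subset A2 -> nat_in A1 k -> nat_in A2 k.
Proof. by move=> /subsetP subA /nat_inP[i iA <-]; rewrite nat_in_ord subA. Qed.

Lemma nat_in_setI A1 A2 k : nat_in (A1 :&: A2) k = nat_in A1 k && nat_in A2 k.
Proof.
have [lt_kn|le_nk] := ltnP k n; last by rewrite !nat_in_ge.
by rewrite !(nat_in_ord _ (Ordinal lt_kn)) inE.
Qed.

Definition set_of (p : nat -> bool) : {set 'I_n} := [set i : 'I_n | p i].

Lemma nat_in_set_of p k : nat_in (set_of p) k = (k < n) && p k.
Proof.
have [lt_kn|le_nk] := ltnP k n; last by rewrite nat_in_ge.
by rewrite (nat_in_ord _ (Ordinal lt_kn)) inE.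
Qed.

Lemma nat_in_set_of_bounded (p : nat -> bool) k :
  (forall j, p j -> j < n) -> nat_in (set_of p) k = p k.
Proof. by move=> p_lt; rewrite nat_in_set_of andb_idl // => /p_lt. Qed.

Lemma grain_patternP E :
  reflect (nat_in E 0 = false /\ forall k, ~~ (nat_in E k && nat_in E k.+1))
          (grain_pattern E).
Proof.
apply: (iffP andP) => [[/forallP E_pos /forallP E_sparse]|[E0 E_sparse]]; split.
- apply/negbTE/negP=> /nat_inP[i iE i0].
  by move: (E_pos i); rewrite iE i0.
- move=> k; apply/negP=> /andP[/nat_inP[i iE ik] /nat_inP[j jE jk]].
  by move: (E_sparse i) => /forallP/(_ j); rewrite iE jE jk ik eqxx.
- apply/forallP=> i; apply/implyP=> iE; rewrite lt0n; apply/negP=> /eqP i0.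
  by move: E0; rewrite -i0 nat_in_ord iE.
- apply/forallP=> i; apply/forallP=> j; apply/implyP=> /andP[iE jE].
  apply/negP=> /eqP ji.
  by move: (E_sparse i); rewrite !nat_in_ord iE -ji nat_in_ord jE.
Qed.

Lemma grain_pattern0 : grain_pattern (set0 : {set 'I_n}).
Proof.
have nat_in0 k : nat_in set0 k = false by apply/nat_inP=> -[i]; rewrite inE.
by apply/grain_patternP; split=> // k; rewrite !nat_in0.
Qed.

Lemma grain_patternI E A : grain_pattern E -> grain_pattern (E :&: A).
Proof.
case/grain_patternP=> E0 E_sparse; apply/grain_patternP.
split=> [|k]; first by rewrite nat_in_setI E0.
by rewrite !nat_in_setI andbACA (negbTE (E_sparse k)).
Qed.

(* Out of range, words are padded with [false]. *)
Definition bit x k : bool := if insub k is Some i then x i else false.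

Lemma bit_ord x (i : 'I_n) : bit x i = x i.
Proof. by rewrite /bit valK. Qed.

Lemma bit_ge x k : n <= k -> bit x k = false.
Proof. by move=> le_nk; rewrite /bit insubF // ltnNge le_nk. Qed.

Lemma bit_insubd x (i : 'I_n) k : k < n -> x (insubd i k) = bit x k.
Proof. by move=> lt_kn; rewrite /insubd /bit; case: insubP => [//|]; rewrite lt_kn. Qed.

Definition switches x := set_of (fun k => (0 < k) && (bit x k != bit x k.-1)).

Lemma bit_phi E x k : k < n ->
  bit (phi E x) k = if nat_in E k then bit x k.-1 else bit x k.
Proof.
move=> lt_kn; have -> : k = Ordinal lt_kn by [].
rewrite [LHS]bit_ord nat_in_ord /phi ffunE.
case: ifP => _; last by rewrite bit_ord.
by rewrite bit_insubd // (leq_ltn_trans (leq_pred k) lt_kn).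
Qed.

Lemma bit_phi_switches E x : E \subset switches x ->
  forall k, bit (phi E x) k = bit x k (+) nat_in E k.
Proof.
move=> sEB k; have [lt_kn|le_nk] := ltnP k n; last by rewrite !bit_ge // nat_in_ge.
rewrite bit_phi //; case Ek: (nat_in E k); last by rewrite addbF.
move: (nat_in_sub sEB Ek); rewrite nat_in_set_of lt_kn /= => /andP[_].
by case: (bit x k); case: (bit x k.-1).
Qed.

Lemma phi_setI_switches E x : grain_pattern E -> phi E x = phi (E :&: switches x) x.
Proof.
case/grain_patternP=> E0 _; apply/ffunP=> j; rewrite !ffunE inE.
case jE: (j \in E) => //=; case jB: (j \in switches x) => //.
have j_gt0 : 0 < j by rewrite lt0n; apply: contraFN E0 => /eqP <-; rewrite nat_in_ord.
move: jB; rewrite -nat_in_ord nat_in_set_of ltn_ord j_gt0 /= => /negbFE/eqP.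
by rewrite bit_ord bit_insubd // (leq_ltn_trans (leq_pred j) (ltn_ord j)).
Qed.

Definition patterns_in t A := [set E in grain_patterns n t | E \subset A].

Lemma patterns_inE t A E :
  (E \in patterns_in t A) = [&& grain_pattern E, #|E| <= t & E \subset A].
Proof. by rewrite !inE andbA. Qed.

Lemma Phi_switches t x : Phi t x = [set phi E x | E in patterns_in t (switches x)].
Proof.
apply/eqP; rewrite eqEsubset; apply/andP; split; apply/subsetP=> y /imsetP[E].
  rewrite inE => /andP[gE cE] ->; rewrite (phi_setI_switches x gE).
  apply/imsetP; exists (E :&: switches x) => //.
  rewrite patterns_inE subsetIr grain_patternI // andbT.
  by apply: leq_trans cE; apply/subset_leq_card/subsetIl.
rewrite patterns_inE => /and3P[gE cE _] ->; apply/imsetP; exists E => //.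
by rewrite inE gE cE.
Qed.

Lemma phi_inj_switches t x :
  {in patterns_in t (switches x) &, injective (fun E => phi E x)}.
Proof.
move=> E F; rewrite !patterns_inE => /and3P[_ _ sE] /and3P[_ _ sF] eqEF.
apply: eq_set_nat => k; have := bit_phi_switches sE k.
by rewrite eqEF (bit_phi_switches sF k); case: (bit x k) => /addbI.
Qed.

Lemma card_Phi t x : #|Phi t x| = #|patterns_in t (switches x)|.
Proof. by rewrite Phi_switches card_in_imset //; apply: phi_inj_switches. Qed.

Definition switches_after A E :=
  set_of (fun k => (0 < k) && (nat_in A k (+) nat_in E k (+) nat_in E k.-1)).

Lemma switches_phi E x :
  E \subset switches x -> switches (phi E x) = switches_after (switches x) E.
Proof.
move=> sE; apply: eq_set_nat => k; rewrite !nat_in_set_of.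
have [lt_kn|] //= := ltnP k n; case: k lt_kn => //= k lt_kn.
rewrite !bit_phi_switches //.
by case: (bit x k); case: (bit x k.+1); case: (nat_in E k); case: (nat_in E k.+1).
Qed.

Section FoldPairs.
Variables (t : nat) (B : {set 'I_n}).

Definition pattern_pairs : {set {set 'I_n} * {set 'I_n}} :=
  [set p | (p.1 \in patterns_in t B) && (p.2 \in patterns_in t (switches_after B p.1))].

Definition fold_pair (p : {set 'I_n} * {set 'I_n}) :=
  (set_of (fold1 (nat_in p.1) (nat_in p.2)), set_of (fold2 (nat_in p.1) (nat_in p.2))).

(* A moved position k is recognized as an E'-position k - 1 followed by an
   F'-position k (lemma moved_fold). *)
Definition unfold_moved A C k := [&& 0 < k, nat_in A k.-1 & nat_in C k].
Definition unfold1 A C :=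
  set_of (fun k => (nat_in A k && ~~ unfold_moved A C k.+1) || unfold_moved A C k).
Definition unmove2 A C k := nat_in C k || unfold_moved A C k.+1.
Definition unfold2 A C :=
  set_of (fun k => (unmove2 A C k && ~~ nat_in (unfold1 A C) k) ||
                   [&& 0 < k, unmove2 A C k.-1 & nat_in (unfold1 A C) k.-1]).
Definition unfold_pair (q : {set 'I_n} * {set 'I_n}) := (unfold1 q.1 q.2, unfold2 q.1 q.2).

Lemma pattern_pairs_sparse E F : (E, F) \in pattern_pairs ->
  [/\ nat_in E 0 = false, forall k, ~~ (nat_in E k && nat_in E k.+1),
      nat_in F 0 = false, forall k, ~~ (nat_in F k && nat_in F k.+1) &
      forall k, (nat_in F k.+1 && nat_in E k.+1) ==> nat_in E k].
Proof.
rewrite inE /= !patterns_inE => /andP[/and3P[gE _ sE] /and3P[gF _ sF]].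
case/grain_patternP: gE => E0 E_sparse; case/grain_patternP: gF => F0 F_sparse.
split=> // k; apply/implyP=> /andP[Fk Ek].
have B'k := nat_in_sub sF Fk; have Bk := nat_in_sub sE Ek.
move: B'k Bk Ek; rewrite nat_in_set_of /= => /andP[_].
by case: (nat_in E k); case: (nat_in E k.+1); case: (nat_in B k.+1).
Qed.

Lemma pattern_pairs_inside E F : (E, F) \in pattern_pairs ->
  [/\ forall k, nat_in E k ==> nat_in B k,
      forall k, nat_in F k.+1 ==> nat_in B k.+1 (+) nat_in E k.+1 (+) nat_in E k,
      #|E| <= t & #|F| <= t].
Proof.
rewrite inE /= !patterns_inE => /andP[/and3P[_ cE sE] /and3P[_ cF sF]].
split=> // k; apply/implyP; first exact: nat_in_sub.
by move/(nat_in_sub sF); rewrite nat_in_set_of /= => /andP[].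
Qed.

Lemma nat_in_fold1 E F k :
  nat_in (set_of (fold1 (nat_in E) (nat_in F))) k = fold1 (nat_in E) (nat_in F) k.
Proof.
apply: nat_in_set_of_bounded => j /(implyP (fold1_support _ _ j)).
by case/orP=> /nat_in_lt // /ltnW.
Qed.

Lemma nat_in_fold2 E F k :
  nat_in (set_of (fold2 (nat_in E) (nat_in F))) k = fold2 (nat_in E) (nat_in F) k.
Proof.
by apply: nat_in_set_of_bounded => j /(implyP (fold2_support _ _ j)) /orP[] /nat_in_lt.
Qed.

Lemma card_fold1_le E F :
  #|set_of (fold1 (nat_in E) (nat_in F))| <= #|E|.
Proof.
pose g (i : 'I_n) := if moved (nat_in E) (nat_in F) i then insubd i i.-1 else i.
apply: leq_trans (leq_imset_card g E); apply/subset_leq_card/subsetP=> j.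
rewrite inE /fold1 => /orP[/andP[Ej not_moved]|moved_j].
  by apply/imsetP; exists j; [rewrite -nat_in_ord | rewrite /g (negbTE not_moved)].
have := moved_j; rewrite /moved => /and4P[/nat_inP[i iE ij] _ _ _].
apply/imsetP; exists i => //; rewrite /g ij moved_j; apply: val_inj.
by rewrite val_insubd /= ltn_ord.
Qed.

Lemma card_fold2_le E F :
  #|set_of (fold2 (nat_in E) (nat_in F))| <= #|F|.
Proof.
pose g (i : 'I_n) := if nat_in E i.-1 then insubd i i.-1 else i.
apply: leq_trans (leq_imset_card g F); apply/subset_leq_card/subsetP=> j.
rewrite inE /fold2 => /orP[/and3P[Fj not_Ej _]|/andP[Ej /nat_inP[i iF ij]]].
  by apply/imsetP; exists j; [rewrite -nat_in_ord | rewrite /g (negbTE not_Ej)].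
apply/imsetP; exists i => //; rewrite /g ij /= Ej; apply: val_inj.
by rewrite val_insubd /= ltn_ord.
Qed.

Lemma fold_pair_in p : p \in pattern_pairs ->
  fold_pair p \in setX (patterns_in t B) (patterns_in t B).
Proof.
case: p => E F pEF; have [E0 E_sparse F0 F_sparse F_E] := pattern_pairs_sparse pEF.
have [E_sub F_sub cE cF] := pattern_pairs_inside pEF.
rewrite inE /= !patterns_inE; apply/andP; split; apply/and3P; split.
- apply/grain_patternP; split=> [|k]; first by rewrite nat_in_fold1 fold1_0.
  by rewrite !nat_in_fold1 fold1_sparse.
- exact: leq_trans (card_fold1_le E F) cE.
- apply: subset_nat => k; rewrite nat_in_fold1.
  exact/implyP/(fold1_sub E0 E_sparse F0 F_sparse E_sub F_sub).
- apply/grain_patternP; split=> [|k]; first by rewrite nat_in_fold2 fold2_0.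
  by rewrite !nat_in_fold2 fold2_sparse.
- exact: leq_trans (card_fold2_le E F) cF.
- apply: subset_nat => k; rewrite nat_in_fold2.
  exact/implyP/(fold2_sub E0 E_sparse F0 F_sparse E_sub F_sub).
Qed.

Lemma fold_pairK : {in pattern_pairs, cancel fold_pair unfold_pair}.
Proof.
case=> E F pEF; have [E0 E_sparse F0 F_sparse F_E] := pattern_pairs_sparse pEF.
rewrite /fold_pair /unfold_pair /=; set A := set_of _; set C := set_of _.
have unfold_movedE k : unfold_moved A C k = moved (nat_in E) (nat_in F) k.
  by rewrite /unfold_moved nat_in_fold1 nat_in_fold2 moved_fold.
have unfold1E : unfold1 A C = E.
  apply: eq_set_nat => k; rewrite nat_in_set_of !unfold_movedE nat_in_fold1.
  by rewrite fold1_unmove // andb_idl // => /nat_in_lt.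
rewrite unfold1E; congr (_, _); apply: eq_set_nat => k.
rewrite nat_in_set_of /unmove2 unfold1E !nat_in_fold2 !unfold_movedE !fold2_unmove //.
have := fold2_unshift E0 E_sparse F0 F_sparse F_E k.
by case: k => [|k] /= ->; rewrite andb_idl // => /nat_in_lt.
Qed.

Lemma sum_card_patterns_switches_after :
  \sum_(E in patterns_in t B) #|patterns_in t (switches_after B E)|
    <= #|patterns_in t B| ^ 2.
Proof.
have -> : \sum_(E in patterns_in t B) #|patterns_in t (switches_after B E)|
          = #|pattern_pairs|.
  rewrite -sum1_card (eq_bigr (fun E => \sum_(F in patterns_in t (switches_after B E)) 1));
    last by move=> E _; rewrite sum1_card.
  by rewrite pair_big_dep; apply: eq_bigl => p; rewrite !inE andbA.
rewrite -(card_in_imset (can_in_inj fold_pairK)) expnS expn1 -cardsX.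
by apply/subset_leq_card/subsetP=> q /imsetP[p pEF ->]; apply: fold_pair_in.
Qed.

End FoldPairs.

Lemma sum_card_Phi_le t x : \sum_(y in Phi t x) #|Phi t y| <= #|Phi t x| ^ 2.
Proof.
rewrite {1}Phi_switches big_imset /=; last exact: phi_inj_switches.
rewrite card_Phi (eq_bigr (fun E => #|patterns_in t (switches_after (switches x) E)|)).
  exact: sum_card_patterns_switches_after.
by move=> E; rewrite patterns_inE => /and3P[_ _ sE]; rewrite card_Phi switches_phi.
Qed.

Lemma mem_Phi_self t x : x \in Phi t x.
Proof.
apply/imsetP; exists set0; first by rewrite inE grain_pattern0 cards0.
by apply/ffunP=> j; rewrite ffunE inE.
Qed.

End Words.

Lemma grain_correcting_disjoint n t (C : {set word n}) : grain_correcting t C ->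
  {in C &, forall c1 c2, c1 != c2 -> [disjoint Phi t c1 & Phi t c2]}.
Proof.
move=> /forallP correct c1 c2 c1C c2C c12.
move: (correct c1); rewrite c1C => /forallP/(_ c2); rewrite c2C c12 /=.
by move=> /existsPn not_conf; apply/pred0P=> y /=; apply/negbTE/not_conf.
Qed.

Local Open Scope ring_scope.

Theorem theorem3p2 (n t : nat) (hn : (0 < n)%N) (ht : (1 <= t <= 3)%N) :
  (M n t)%:R <= \sum_(x : word n) ((#|Phi t x|)%:R)^-1 :> rat.
Proof.
apply: (big_ind (fun m : nat => m%:R <= _ :> rat)).
- by apply: sumr_ge0 => x _; rewrite invr_ge0 ler0n.
- by move=> a b a_le b_le; rewrite /maxn; case: ltnP.
- move=> C /grain_correcting_disjoint disj.
  exact: (card_le_sum_inv_card_ball _ (@mem_Phi_self n t) (@sum_card_Phi_le n t)).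
Qed.
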